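(* Let $a=a_1a_2\cdots a_n$ be a signed permutation on $[n]$, let $\tilde s=(0,a_1,a_2,\ldots,a_n,-a_n,-a_{n-1},\ldots,-a_1)$ and $p_r=(-1,-2,\ldots,-n+1,-n,n,n-1,\ldots,2,1,0)$, both $(2n+1)$-cycles on $\{-n,\ldots,-1,0,1,\ldots,n\}$. Then $$d_r(a)\ \ge\ \frac{2n+1-C(p_r\tilde s)}{2}.$$
   Context: Permutations are multiplied as composition of maps, $(\sigma\tau)(x)=\sigma(\tau(x))$; $C(\pi)$ is the number of cycles of $\pi$, fixed points included. A signed permutation on $[n]$ is a sequence $a_1\cdots a_n$ with $a_k\in\{\pm1,\ldots,\pm n\}$ such that $|a_1|,\ldots,|a_n|$ is a permutation of $[n]$. A reversal $\varrho_{i,j}$ ($1\le i\le j\le n$) changes $a$ into $a_1\cdots a_{i-1}(-a_j)(-a_{j-1})\cdots(-a_i)a_{j+1}\cdots a_n$. The reversal distance $d_r(a)$ is the minimum number of reversals needed to transform $a$ into $12\cdots n$. *)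

From mathcomp Require Import all_boot all_order all_algebra.
Unset Strict Implicit. Unset Printing Implicit Defensive.
Import Order.TTheory GRing.Theory Num.Theory.
Local Open Scope ring_scope.

Definition signed_perm (n : nat) (a : seq int) : bool :=
  (size a == n) && perm_eq [seq `|x|%N | x <- a] (iota 1 n).

Definition id_signed (n : nat) : seq int := [seq (k%:Z) | k <- iota 1 n].

(* reversal rho_{i,j} (1-based, 1 <= i <= j <= n):
   a_1..a_{i-1} (-a_j) ... (-a_i) a_{j+1} .. a_n *)
Definition reversal (i j : nat) (a : seq int) : seq int :=
  take i.-1 a ++ [seq - x | x <- rev (drop i.-1 (take j a))] ++ drop j a.

Definition valid_reversal (n : nat) (ij : nat * nat) : bool :=
  (1 <= ij.1)%N && (ij.1 <= ij.2)%N && (ij.2 <= n)%N.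

Definition apply_reversals (rs : seq (nat * nat)) (a : seq int) : seq int :=
  foldl (fun b ij => reversal ij.1 ij.2 b) a rs.

(* a can be transformed into 12...n by some sequence of exactly k reversals;
   the reversal distance d_r(a) is the least such k. *)
Definition sortable_in (n : nat) (a : seq int) (k : nat) : Prop :=
  exists rs : seq (nat * nat),
    [/\ size rs = k, all (valid_reversal n) rs & apply_reversals rs a = id_signed n].

(* The set {-n,...,n} is encoded as 'I_(2n+1): the ordinal x encodes x - n. *)
Definition enc (n : nat) (v : int) : 'I_(n.*2.+1) := inord (absz (v + n%:Z)).

Definition s_tilde_seq (a : seq int) : seq int :=
  [:: 0] ++ a ++ [seq - x | x <- rev a].

Definition p_r_seq (n : nat) : seq int :=
  [seq - (k%:Z) | k <- iota 1 n] ++ [seq (k%:Z) | k <- rev (iota 1 n)] ++ [:: 0].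

Definition cycle_fun (n : nat) (c : seq int) : 'I_(n.*2.+1) -> 'I_(n.*2.+1) :=
  next [seq enc n v | v <- c].

Definition s_tilde (n : nat) (a : seq int) := cycle_fun n (s_tilde_seq a).
Definition p_r (n : nat) := cycle_fun n (p_r_seq n).

(* number of cycles (fixed points included) of a bijection of a finite type *)
Definition ncycles (T : finType) (f : T -> T) : nat := fcard f T.
Arguments ncycles {T} f.

(* A reversal of the block A = a_i..a_j turns the cycle s~ = (0 X A D -D' -A' -X')
   (primes denoting reversal) into (0 X -A' D -D' A -X'): up to rotation, the
   cycle (A Y B W) becomes (A W B Y).  Both of these split into the same pair of
   disjoint cycles (A W)(B Y) by composing with a single transposition, so
   s~ changes by two transpositions, and the number of cycles of p_r s~ by at
   most 2.  Since p_r is the inverse of s~ for the identity, C(p_r s~) = 2n+1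
   at the end of a sorting sequence of k reversals, whence 2n+1 - C <= 2k. *)

From mathcomp Require Import all_boot all_order all_algebra.
From mathcomp Require Import fingroup perm zify.
Set Implicit Arguments. Unset Strict Implicit. Unset Printing Implicit Defensive.
Import GRing.Theory Num.Theory.

Section NextSeq.
Variable T : eqType.
Implicit Types (s u v : seq T) (x y : T).

Lemma next_mid u x y v : uniq (u ++ x :: y :: v) -> next (u ++ x :: y :: v) x = y.
Proof.
move=> U; rewrite next_nth mem_cat inE eqxx orbT.
have xu : x \notin u.
  by move: U; rewrite cat_uniq => /and3P[_ /hasPn xNu _]; apply: xNu; rewrite inE eqxx.
rewrite index_cat (negbTE xu) /= eqxx addn0.
case: u {U xu} => [|z u] //=.
by rewrite nth_cat ltnNge leqnSn /= subSnn.
Qed.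

Lemma next_last x s : uniq (x :: s) -> next (x :: s) (last x s) = x.
Proof.
move=> U; rewrite next_nth mem_last index_last //.
by case: s U => //= ? ?; rewrite nth_default.
Qed.

Lemma next_rotC s u : uniq (s ++ u) -> next (s ++ u) =1 next (u ++ s).
Proof. by move=> U x; rewrite -(next_rot (size s) U) rot_size_cat. Qed.

Lemma next_notin s x : x \notin s -> next s x = x.
Proof. by move=> xNs; rewrite next_nth (negbTE xNs). Qed.

Lemma next_catl x0 s u x :
  uniq (s ++ u) -> x \in s -> x != last x0 s -> next (s ++ u) x = next s x.
Proof.
move=> U xs; case/splitPr: xs U => p [|y q] U; first by rewrite last_cat eqxx.
move=> _; have Ups : uniq (p ++ [:: x, y & q]) by move: U; rewrite cat_uniq => /andP[].
by rewrite -catA /= !next_mid //; move: U; rewrite -catA.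
Qed.

Lemma next_catr x0 s u x :
  uniq (s ++ u) -> x \in u -> x != last x0 u -> next (s ++ u) x = next u x.
Proof. by move=> U xu xl; rewrite next_rotC // (next_catl _ xu xl) // uniq_catC. Qed.

End NextSeq.

Section CycleSplit.
Variable T : finType.
Implicit Types (s u : seq T) (x : T).

Lemma next_cat_tperm x0 s u x : uniq (s ++ u) -> s != [::] -> u != [::] ->
  next (s ++ u) (tperm (last x0 s) (last x0 u) x) = next s (next u x).
Proof.
case: s => [|a s] //; case: u => [|b u] // U _ _.
rewrite [last _ (a :: s)]/= [last _ (b :: u)]/=.
have U' : uniq ((b :: u) ++ a :: s) by rewrite uniq_catC.
have [Us Uu] : uniq (a :: s) /\ uniq (b :: u) by move: U; rewrite cat_uniq => /and3P[].
have disj y : y \in a :: s -> y \notin b :: u.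
  by move: U; rewrite cat_uniq => /and3P[_ /hasPn uNs _]; apply/contraL/uNs.
have [-> | xNla] := eqVneq x (last a s).
  rewrite tpermL (next_notin (disj _ (mem_last a s))) (next_last Us) (next_rotC U).
  by move: U'; rewrite (lastI b u) cat_rcons => U'; rewrite next_mid.
have [-> | xNlb] := eqVneq x (last b u).
  rewrite tpermR (next_last Uu) (next_notin (contraL (disj b) (mem_head b u))).
  by move: U; rewrite (lastI a s) cat_rcons => U; rewrite next_mid.
rewrite tpermD 1?eq_sym //.
have [xs | xNs] := boolP (x \in a :: s).
  by rewrite (next_notin (disj _ xs)) (next_catl U xs xNla).
have [xu | xNu] := boolP (x \in b :: u).
  rewrite (next_catr (x0 := b) U xu xNlb) [RHS]next_notin //.
  by apply: (contraL (disj _)); rewrite mem_next.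
by rewrite !next_notin // mem_cat negb_or xNs.
Qed.

Lemma last_cat_nonnil x0 s u : u != [::] -> last x0 (s ++ u) = last x0 u.
Proof. by case: u => // y u _; rewrite last_cat. Qed.

Lemma next_swap_blocks x0 A Y B W :
  uniq (A ++ Y ++ B ++ W) -> A != [::] -> B != [::] -> W != [::] ->
  next (A ++ W ++ B ++ Y) =1 next (A ++ Y ++ B ++ W)
    \o tperm (last x0 A) (last x0 B) \o tperm (last x0 W) (last x0 (B ++ Y)).
Proof.
move=> U nA nB nW x /=.
have U1 : uniq ((A ++ W) ++ B ++ Y).
  by rewrite -(perm_uniq (_ : perm_eq (A ++ Y ++ B ++ W) _)) //; apply/seq.permP => p; rewrite !count_cat; lia.
have U2 : uniq ((W ++ A) ++ Y ++ B) by rewrite -catA uniq_catC -!catA.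
have [UAW UBY] : uniq (A ++ W) /\ uniq (B ++ Y) by move: U1; rewrite cat_uniq => /and3P[].
have [UWA UYB] : uniq (W ++ A) /\ uniq (Y ++ B) by move: U2; rewrite cat_uniq => /and3P[].
have nAW : A ++ W != [::] by case: (A) nA.
have nBY : B ++ Y != [::] by case: (B) nB.
have nWA : W ++ A != [::] by case: (W) nW.
have nYB : Y ++ B != [::] by case: (Y).
rewrite -[x in LHS](tpermK (last x0 W) (last x0 (B ++ Y))) catA.
rewrite -{1}(last_cat_nonnil x0 A nW) next_cat_tperm //.
have rotW : next (A ++ Y ++ B ++ W) =1 next ((W ++ A) ++ Y ++ B).
  have U3 : uniq (((A ++ Y) ++ B) ++ W) by rewrite -!catA.
  by move=> z; rewrite !catA (next_rotC U3) !catA.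
rewrite rotW -{1}(last_cat_nonnil x0 W nA) -(last_cat_nonnil x0 Y nB) next_cat_tperm //.
by rewrite (next_rotC UWA) (next_rotC UYB).
Qed.

End CycleSplit.

Section CycleCount.
Variable T : finType.

Lemma eq_ncycles (f g : T -> T) : f =1 g -> ncycles f = ncycles g.
Proof. by move=> fg; rewrite /ncycles; apply: eq_fcard. Qed.

Lemma ncycles_perm (s : {perm T}) : ncycles s = #|porbits s|.
Proof.
have sym : connect_sym (frel s) := fconnect_sym (@perm_inj _ s).
have fconnect_porbit x y : (y \in porbit s x) = fconnect s x y.
  apply/porbitP/idP => [[i ->]|/iter_findex <-]; first by rewrite permX fconnect_iter.
  by exists (findex s x y); rewrite permX.
have -> : porbits s = porbit s @: [set x | froots s x].
  apply/setP => S; apply/imsetP/imsetP => [[x _ ->]|[x _ ->]]; last by exists x.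
  exists (froot s x); first by rewrite inE (roots_root sym).
  by apply/eqP; rewrite eq_porbit_mem fconnect_porbit sym connect_root.
rewrite card_in_imset.
  by rewrite /ncycles /n_comp_mem cardsE; apply: eq_card => x; rewrite !inE andbT.
move=> x y; rewrite !inE => rx ry /eqP; rewrite eq_porbit_mem fconnect_porbit.
by move/(fingraph.rootP sym); rewrite (eqP rx) (eqP ry).
Qed.

Lemma ncycles_comp_tperm (f : T -> T) x y :
  injective f -> ncycles (f \o tperm x y) <= (ncycles f).+1.
Proof.
move=> inj_f; pose s := perm inj_f.
rewrite (@eq_ncycles f s) => [|z]; last by rewrite permE.
rewrite (@eq_ncycles _ (tperm x y * s)%g) => [|z]; last by rewrite permM permE.
rewrite !ncycles_perm; have := porbits_mul_tperm s x y.
by case: (x \notin _); case: (x != y) => /=; lia.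
Qed.

End CycleCount.

Lemma uniq_map_inj_in (T1 T2 : eqType) (f : T1 -> T2) s :
  uniq (map f s) -> {in s &, injective f}.
Proof.
elim: s => //= z s IH /andP[fzNs U] x y.
rewrite !inE => /predU1P[->|xs] /predU1P[->|ys] // fxy.
- by move: fzNs; rewrite fxy map_f.
- by move: fzNs; rewrite -fxy map_f.
- exact: IH.
Qed.

Local Open Scope ring_scope.

Definition revN (s : seq int) : seq int := [seq - x | x <- rev s].

Lemma revNK : involutive revN.
Proof. by move=> s; rewrite /revN map_rev -map_comp (eq_map (@opprK _)) map_id revK. Qed.

Lemma mem_revN s x : (x \in revN s) = (- x \in s).
Proof. by rewrite -[x in LHS]opprK mem_map ?mem_rev //; exact: oppr_inj. Qed.

Lemma s_tilde_seq_cat X A D :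
  s_tilde_seq (X ++ A ++ D) = 0 :: X ++ A ++ (D ++ revN D) ++ revN A ++ revN X.
Proof. by rewrite /s_tilde_seq /revN /= !rev_cat !map_cat -!catA. Qed.

Lemma p_r_seqE n : p_r_seq n = rev (s_tilde_seq (id_signed n)).
Proof.
rewrite /p_r_seq /s_tilde_seq /id_signed /= rev_cons rev_cat -cats1 -catA.
by rewrite !map_rev revK -map_comp.
Qed.

Lemma enc_inj n v w : (`|v| <= n)%N -> (`|w| <= n)%N -> enc n v = enc n w -> v = w.
Proof. by move=> vn wn /(congr1 val); rewrite /enc /= !inordK; lia. Qed.

Section SignedPerm.
Variable n : nat.
Implicit Types (b X A D : seq int) (x : int).

Lemma signed_perm_size b : signed_perm n b -> size b = n.
Proof. by case/andP => /eqP. Qed.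

Lemma signed_perm_abs b x : signed_perm n b -> x \in b -> (0 < `|x| <= n)%N.
Proof.
case/andP => _ Pb xb; have : `|x|%N \in iota 1 n by rewrite -(perm_mem Pb) map_f.
by rewrite mem_iota; lia.
Qed.

Lemma signed_perm_id : signed_perm n (id_signed n).
Proof.
rewrite /signed_perm /id_signed size_map size_iota eqxx -map_comp.
by rewrite (@eq_map _ _ _ id) ?map_id ?perm_refl.
Qed.

Lemma signed_perm_revN X A D :
  signed_perm n (X ++ A ++ D) -> signed_perm n (X ++ revN A ++ D).
Proof.
case/andP => sz Pb; apply/andP; split.
  by move: sz; rewrite !size_cat /revN size_map size_rev.
apply: perm_trans Pb; rewrite !map_cat perm_cat2l perm_cat2r /revN -map_comp.
by rewrite (eq_map (g := absz) (@abszN)) map_rev perm_rev.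
Qed.

Lemma uniq_s_tilde_seq b : signed_perm n b -> uniq [seq enc n v | v <- s_tilde_seq b].
Proof.
move=> sb; have b_abs := signed_perm_abs sb.
have Ub : uniq (map absz b) by case/andP: sb => _ Pb; rewrite (perm_uniq Pb) iota_uniq.
have b0 : 0 \notin b by apply/negP => /b_abs.
have st_abs v : v \in s_tilde_seq b -> (`|v| <= n)%N.
  rewrite /s_tilde_seq /= -/(revN b) inE mem_cat mem_revN.
  by case/predU1P=> [->|/orP[/b_abs|/b_abs]] //; rewrite ?abszN; lia.
rewrite map_inj_in_uniq => [|v w /st_abs vn /st_abs wn]; last exact: enc_inj.
have Ub' := map_uniq Ub.
rewrite /s_tilde_seq /= -/(revN b) mem_cat mem_revN oppr0 negb_or b0 cat_uniq Ub'.
rewrite {2}/revN (map_inj_uniq oppr_inj) rev_uniq Ub' andbT /=.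
rewrite andbT; apply/hasPn => x; rewrite mem_revN => Nxb; apply/negP => xb.
have xN : - x = x by apply: (uniq_map_inj_in Ub Nxb xb); rewrite abszN.
have x0 : x = 0 by lia.
by move: b0; rewrite -x0 xb.
Qed.

Lemma s_tilde_inj b : signed_perm n b -> injective (s_tilde n b).
Proof. by move=> sb; apply: can_inj (prev_next (uniq_s_tilde_seq sb)). Qed.

Lemma uniq_p_r_seq : uniq [seq enc n v | v <- p_r_seq n].
Proof. by rewrite p_r_seqE map_rev rev_uniq uniq_s_tilde_seq ?signed_perm_id. Qed.

Lemma p_r_inj : injective (p_r n).
Proof. exact: can_inj (prev_next uniq_p_r_seq). Qed.

Lemma p_r_s_tilde_id : p_r n \o s_tilde n (id_signed n) =1 id.
Proof.
have U := uniq_s_tilde_seq signed_perm_id.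
by move=> x; rewrite /= /p_r /s_tilde /cycle_fun p_r_seqE map_rev (next_rev U) (prev_next U).
Qed.

End SignedPerm.

Lemma reversal_blocks n b i j : size b = n -> valid_reversal n (i, j) ->
  exists X A D, [/\ b = X ++ A ++ D, reversal i j b = X ++ revN A ++ D & A != [::]].
Proof.
move=> <- /andP[/andP[/= i1 ij] jb].
exists (take i.-1 b), (drop i.-1 (take j b)), (drop j b); split => //.
  by rewrite catA -{1}(take_takel b (_ : i.-1 <= j)%N) ?cat_take_drop //; lia.
by rewrite -size_eq0 size_drop size_takel //; lia.
Qed.

Section ReversalBound.
Variable n : nat.
Implicit Types (b X A D : seq int).

Lemma s_tilde_revN_block X A D : signed_perm n (X ++ A ++ D) -> A != [::] ->
  exists t1 t2 : 'I_n.*2.+1 * 'I_n.*2.+1,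
    s_tilde n (X ++ revN A ++ D) =1 s_tilde n (X ++ A ++ D) \o tperm t1.1 t1.2 \o tperm t2.1 t2.2.
Proof.
move=> sb nA; pose e := enc n.
have st_map A' : [seq e v | v <- s_tilde_seq (X ++ A' ++ D)] = (e 0 :: map e X) ++
    map e A' ++ map e (D ++ revN D) ++ map e (revN A') ++ map e (revN X).
  by rewrite s_tilde_seq_cat /= !map_cat.
have U0 := uniq_s_tilde_seq sb; rewrite -/e st_map in U0.
set Ae := map e A in U0 *; set Ye := map e (D ++ revN D) in U0 *.
set Be := map e (revN A) in U0 *; set We := map e (revN X) ++ e 0 :: map e X.
have U : uniq (Ae ++ Ye ++ Be ++ We) by move: U0; rewrite uniq_catC /We -!catA.
have U1 : uniq ((Be ++ Ye) ++ Ae ++ We).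
  by rewrite -(perm_uniq (_ : perm_eq (Ae ++ Ye ++ Be ++ We) _)) //; apply/seq.permP => p; rewrite !count_cat; lia.
have Eold : s_tilde n (X ++ A ++ D) =1 next (Ae ++ Ye ++ Be ++ We).
  by move=> x; rewrite /s_tilde /cycle_fun -/e st_map (next_rotC U0) /We -!catA.
have Enew : s_tilde n (X ++ revN A ++ D) =1 next (Ae ++ We ++ Be ++ Ye).
  move=> x; rewrite /s_tilde /cycle_fun -/e st_map revNK -/Ae -/Ye -/Be next_rotC.
    by rewrite -!catA -/We catA (next_rotC U1) -!catA.
  by rewrite uniq_catC /We -!catA in U1 *.
have nAe : Ae != [::] by rewrite /Ae -size_eq0 size_map size_eq0.
have nBe : Be != [::] by rewrite /Be /revN -size_eq0 !size_map size_rev size_eq0.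
have nWe : We != [::] by rewrite /We; case: (map e (revN X)).
exists (last (e 0) Ae, last (e 0) Be), (last (e 0) We, last (e 0) (Be ++ Ye)) => x.
by rewrite Enew (next_swap_blocks (e 0) U) //= Eold.
Qed.

Lemma signed_perm_reversal b i j :
  signed_perm n b -> valid_reversal n (i, j) -> signed_perm n (reversal i j b).
Proof.
move=> sb /(reversal_blocks (signed_perm_size sb))[X [A [D [Eb -> _]]]].
by rewrite Eb in sb; apply: signed_perm_revN.
Qed.

Lemma ncycles_reversal b i j : signed_perm n b -> valid_reversal n (i, j) ->
  (ncycles (p_r n \o s_tilde n (reversal i j b)) <= (ncycles (p_r n \o s_tilde n b)).+2)%N.
Proof.
move=> sb /(reversal_blocks (signed_perm_size sb))[X [A [D [Eb -> nA]]]].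
rewrite Eb in sb *; have [[x1 y1] [[x2 y2] E]] := s_tilde_revN_block sb nA.
set g := p_r n \o s_tilde n (X ++ A ++ D).
have inj_g : injective g := inj_comp (@p_r_inj n) (s_tilde_inj sb).
rewrite (@eq_ncycles _ _ (g \o tperm x1 y1 \o tperm x2 y2)) => [|x]; last by rewrite /= E.
apply: leq_trans (ncycles_comp_tperm _ _ (inj_comp inj_g (@perm_inj _ _))) _.
by rewrite ltnS ncycles_comp_tperm.
Qed.

Lemma ncycles_apply_reversals rs b : signed_perm n b -> all (valid_reversal n) rs ->
  (ncycles (p_r n \o s_tilde n (apply_reversals rs b))
    <= ncycles (p_r n \o s_tilde n b) + (size rs).*2)%N.
Proof.
elim: rs b => [|[i j] rs IH] b sb /=; first by rewrite addn0.
case/andP => v vs; have := IH _ (signed_perm_reversal sb v) vs.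
have := ncycles_reversal sb v; rewrite doubleS; lia.
Qed.

End ReversalBound.

Theorem theorem4 (n : nat) (a : seq int) :
  signed_perm n a ->
  forall k : nat, sortable_in n a k ->
    (n.*2.+1 - ncycles (fun x => p_r n (s_tilde n a x)) <= k.*2)%N.
Proof.
move=> sa k [rs [<- valid sorted]]; change (n.*2.+1 - ncycles (p_r n \o s_tilde n a) <= (size rs).*2)%N.
have := ncycles_apply_reversals sa valid.
by rewrite sorted (eq_ncycles (@p_r_s_tilde_id n)) [ncycles id]fcard_id card_ord; lia.
Qed.
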